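(* Let $G(\pi_i,\pi_i')=\frac12\|\pi_i-\pi_i'\|^2$ and $\mu>0$. Let $K\ge1$, $c>1$, and $$T_\sigma\ge\max\Big(\frac{3}{\ln c}\ln K+\frac{\ln 64}{\ln c},\,1\Big).$$ Let $\sigma^0,\sigma^1,\dots,\sigma^K\in\mathcal X$ satisfy $$\|\pi^{\mu,\sigma^k}-\sigma^{k+1}\|\le\|\pi^{\mu,\sigma^k}-\sigma^k\|\,c^{-T_\sigma}\quad\text{for } k=0,\dots,K-1.$$ Assume $\sqrt{\sum_{i=1}^N\|\nabla_{\pi_i}v_i(\pi)\|^2}\le\zeta$ for all $\pi\in\mathcal X$. Then for any Nash equilibrium $\pi^*\in\Pi^*$, $$\mathrm{exploit}(\sigma^K)\le\frac{2\sqrt2\big((\mu+L)\,\mathrm{diam}(\mathcal X)+\zeta\big)}{\sqrt K}\sqrt{\|\pi^*-\sigma^0\|\Big(8\|\pi^*-\sigma^0\|+\frac\zeta\mu\Big)}.$$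
   Context: Game. Let $N\ge1$. For each $i\in[N]$, $\mathcal X_i\subseteq\mathbb R^{d_i}$ is a nonempty compact convex set, and $\mathcal X=\prod_i\mathcal X_i$. Each $v_i:\mathcal X\to\mathbb R$ is differentiable, with block gradient $\nabla_{\pi_i}v_i$. The norm is Euclidean, with $\|\pi\|^2=\sum_i\|\pi_i\|^2$. The game is monotone: $\sum_i\langle\nabla_{\pi_i}v_i(\pi)-\nabla_{\pi_i}v_i(\pi'),\pi_i-\pi_i'\rangle\le0$ for all $\pi,\pi'$. The game is $L$-smooth: $\sum_i\|\nabla_{\pi_i}v_i(\pi)-\nabla_{\pi_i}v_i(\pi')\|^2\le L^2\|\pi-\pi'\|^2$. A Nash equilibrium is a $\pi^*\in\mathcal X$ with $v_i(\pi^* )\ge v_i(\pi_i,\pi^*_{-i})$ for all $i$ and $\pi_i\in\mathcal X_i$. $\Pi^*$ is the set of Nash equilibria. Exploitability and diameter: $\mathrm{exploit}(\pi)=\sum_i(\max_{\tilde\pi_i\in\mathcal X_i}v_i(\tilde\pi_i,\pi_{-i})-v_i(\pi))$ and $\mathrm{diam}(\mathcal X)=\sup_{\pi,\pi'\in\mathcal X}\|\pi-\pi'\|$. Perturbed equilibrium. For $\mu>0$ and $\sigma\in\mathcal X$, $\pi^{\mu,\sigma}$ is the (unique) profile with $\pi_i^{\mu,\sigma}\in\arg\max_{\pi_i\in\mathcal X_i}\{v_i(\pi_i,\pi^{\mu,\sigma}_{-i})-\mu G(\pi_i,\sigma_i)\}$ for all $i$. *)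

From HB Require Import structures.
From mathcomp Require Import all_boot all_order all_algebra.
From mathcomp Require Import all_classical all_reals all_analysis.
From mathcomp Require Import matrix_topology matrix_normedtype convex.
Set Implicit Arguments. Unset Strict Implicit. Unset Printing Implicit Defensive.
Import Order.TTheory GRing.Theory Num.Theory.
Import numFieldNormedType.Exports.
Local Open Scope classical_set_scope.
Local Open Scope ring_scope.

Section Game.
Variables (R : realType) (N : nat) (d : 'I_N -> nat).

Definition strat (i : 'I_N) := 'rV[R]_(d i).
Definition profile := forall i : 'I_N, strat i.

Definition sdot (i : 'I_N) (x y : strat i) : R := \sum_(j < d i) x 0 j * y 0 j.
Definition snorm (i : 'I_N) (x : strat i) : R := Num.sqrt (sdot x x).

Definition pdot (p q : profile) : R := \sum_(i < N) sdot (p i) (q i).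
Definition pnorm (p : profile) : R := Num.sqrt (pdot p p).
Definition psub (p q : profile) : profile := fun i => p i - q i.

Definition upd (p : profile) (i : 'I_N) (x : strat i) : profile :=
  @dfwith _ strat p i x.

Definition Gdist (i : 'I_N) (x y : strat i) : R := 2^-1 * (snorm (x - y)) ^+ 2.

Variable Xs : forall i : 'I_N, set (strat i).
Arguments Xs : clear implicits.

Definition inX (p : profile) : Prop := forall i, Xs i (p i).

Definition strategy_sets_ok : Prop :=
  forall i, Xs i !=set0 /\ compact (Xs i : set 'rV[R]_(d i)) /\
            convex_set (Xs i : set (convex_lmodType 'rV[R]_(d i))).

Variable v : 'I_N -> profile -> R.

(* The block gradient nabla_{pi_i} v_i(p) is  gradv i p i. *)
Definition is_gradient (gradv : 'I_N -> profile -> profile) : Prop :=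
  forall i p, inX p -> forall eps : R, 0 < eps -> exists2 delta : R, 0 < delta &
    forall q, inX q -> pnorm (psub q p) < delta ->
      `| v i q - v i p - pdot (gradv i p) (psub q p) | <= eps * pnorm (psub q p).

Definition monotone_game (gradv : 'I_N -> profile -> profile) : Prop :=
  forall p q, inX p -> inX q ->
    \sum_(i < N) sdot (gradv i p i - gradv i q i) (p i - q i) <= 0.

Definition smooth_game (L : R) (gradv : 'I_N -> profile -> profile) : Prop :=
  forall p q, inX p -> inX q ->
    \sum_(i < N) (snorm (gradv i p i - gradv i q i)) ^+ 2
      <= L ^+ 2 * (pnorm (psub p q)) ^+ 2.

Definition nash_eq (p : profile) : Prop :=
  inX p /\ forall i (x : strat i), Xs i x -> v i (upd p x) <= v i p.

(* exploit(pi) = sum_i (max_{x in X_i} v_i(x, pi_{-i}) - v_i(pi))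
   (the max exists by compactness and continuity; we write it as sup) *)
Definition exploit (p : profile) : R :=
  \sum_(i < N) (sup [set v i (upd p x) | x in Xs i] - v i p).

Definition diamX : R :=
  sup [set pnorm (psub pq.1 pq.2) | pq in [set pq : profile * profile | inX pq.1 /\ inX pq.2]].

Definition perturbed_eq (mu : R) (sigma p : profile) : Prop :=
  inX p /\ forall i (x : strat i), Xs i x ->
    v i (upd p x) - mu * Gdist x (sigma i) <= v i p - mu * Gdist (p i) (sigma i).

End Game.

From HB Require Import structures.
From mathcomp Require Import all_boot all_order all_algebra.
From mathcomp Require Import all_classical all_reals all_analysis.
From mathcomp Require Import matrix_topology matrix_normedtype convex.
From mathcomp Require Import ring lra zify.
Set Implicit Arguments. Unset Strict Implicit. Unset Printing Implicit Defensive.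
Import Order.TTheory GRing.Theory Num.Theory.
Import numFieldNormedType.Exports.
Local Open Scope classical_set_scope.
Local Open Scope ring_scope.

(* Write pi_k for the perturbed equilibrium anchored at sigma^k, r_k = |pi_k - sigma^k| and
   D_k = |pi* - sigma^k|.  First-order optimality characterises pi_k and pi* by variational
   inequalities, and together with monotonicity these give |pi* - pi_k|^2 + r_k^2 <= D_k^2.
   As sigma^{k+1} lies within delta r_k of pi_k, where delta = c^(-T_sigma) <= 1/(64 K), this
   yields D_{k+1}^2 <= (1 + 3 delta) D_k^2 - r_k^2 and r_{k+1} <= (1 + 2 delta) r_k.  Summing the
   first recursion bounds sum_k r_k^2 by 2 D_0^2, and by the second every r_k is at least
   r_{K-1}/2, so K r_{K-1}^2 <= 8 D_0^2.  Monotonicity also makes each payoff concave along the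
   player's own deviations, so the exploitability of sigma^K is at most
   sup_y <grad v(sigma^K), y - sigma^K>, which the variational inequality at pi_{K-1}, smoothness
   and the gradient bound make at most ((mu + L) diam X + zeta) r_{K-1}. *)

Section InnerProduct.
Variables (R : realType) (N : nat) (d : 'I_N -> nat).
Local Notation strat := (strat R d).
Local Notation profile := (profile R d).

Lemma sdotC i (x y : strat i) : sdot x y = sdot y x.
Proof. by apply: eq_bigr => j _; rewrite mulrC. Qed.

Lemma sdotDl i (x y z : strat i) : sdot (x + y) z = sdot x z + sdot y z.
Proof. by rewrite /sdot -big_split; apply: eq_bigr => j _; rewrite mxE mulrDl. Qed.

Lemma sdotBl i (x y z : strat i) : sdot (x - y) z = sdot x z - sdot y z.
Proof. by rewrite /sdot -sumrB; apply: eq_bigr => j _; rewrite !mxE mulrBl. Qed.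

Lemma sdotZl i a (x z : strat i) : sdot (a *: x) z = a * sdot x z.
Proof. by rewrite /sdot mulr_sumr; apply: eq_bigr => j _; rewrite mxE mulrA. Qed.

Lemma sdot0l i (z : strat i) : sdot 0 z = 0.
Proof. by rewrite -(scale0r 0) sdotZl mul0r. Qed.

Lemma sdotDr i (x y z : strat i) : sdot z (x + y) = sdot z x + sdot z y.
Proof. by rewrite sdotC sdotDl !(sdotC z). Qed.

Lemma sdotZr i a (x z : strat i) : sdot z (a *: x) = a * sdot z x.
Proof. by rewrite sdotC sdotZl sdotC. Qed.

Lemma sdot0r i (z : strat i) : sdot z 0 = 0.
Proof. by rewrite sdotC sdot0l. Qed.

Lemma sdot_ge0 i (x : strat i) : 0 <= sdot x x.
Proof. by apply: sumr_ge0 => j _; rewrite -expr2 sqr_ge0. Qed.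

Lemma snorm_sq i (x : strat i) : snorm x ^+ 2 = sdot x x.
Proof. by rewrite sqr_sqrtr // sdot_ge0. Qed.

Lemma sdot_eq0l i (x y : strat i) : sdot x x = 0 -> sdot x y = 0.
Proof.
move=> /eqP; rewrite psumr_eq0 => [/allP x0|j _]; last by rewrite -expr2 sqr_ge0.
rewrite /sdot big1 // => j _; have /implyP := x0 j (mem_index_enum j).
by rewrite -expr2 sqrf_eq0 => /(_ isT) /eqP ->; rewrite mul0r.
Qed.

Definition pscale (a : R) (p : profile) : profile := fun i => a *: p i.

Lemma pdotC (p q : profile) : pdot p q = pdot q p.
Proof. by apply: eq_bigr => i _; rewrite sdotC. Qed.

Lemma pdotBl (p q r : profile) : pdot (psub p q) r = pdot p r - pdot q r.
Proof. by rewrite /pdot -sumrB; apply: eq_bigr => i _; rewrite sdotBl. Qed.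

Lemma pdotBr (p q r : profile) : pdot r (psub p q) = pdot r p - pdot r q.
Proof. by rewrite pdotC pdotBl !(pdotC r). Qed.

Lemma pdotZl a (p r : profile) : pdot (pscale a p) r = a * pdot p r.
Proof. by rewrite /pdot mulr_sumr; apply: eq_bigr => i _; rewrite sdotZl. Qed.

Lemma pdotZr a (p r : profile) : pdot r (pscale a p) = a * pdot r p.
Proof. by rewrite pdotC pdotZl pdotC. Qed.

Lemma pdot_ge0 (p : profile) : 0 <= pdot p p.
Proof. by apply: sumr_ge0 => i _; apply: sdot_ge0. Qed.

Lemma pdot_eq0l (p q : profile) : pdot p p = 0 -> pdot p q = 0.
Proof.
move=> /eqP; rewrite psumr_eq0 => [/allP p0|i _]; last exact: sdot_ge0.
rewrite /pdot big1 // => i _; apply: sdot_eq0l; apply/eqP.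
by have /implyP := p0 i (mem_index_enum i); apply.
Qed.

Lemma pnorm_ge0 (p : profile) : 0 <= pnorm p.
Proof. exact: sqrtr_ge0. Qed.

Lemma pnorm_sq (p : profile) : pnorm p ^+ 2 = pdot p p.
Proof. by rewrite sqr_sqrtr // pdot_ge0. Qed.

Lemma pnorm_sum (p : profile) : pnorm p = Num.sqrt (\sum_(i < N) snorm (p i) ^+ 2).
Proof. by congr Num.sqrt; apply: eq_bigr => i _; rewrite snorm_sq. Qed.

Lemma pdot_le_pnormM (p q : profile) : pdot p q <= pnorm p * pnorm q.
Proof.
have [p0|p0] := eqVneq (pnorm p) 0.
  by rewrite p0 mul0r pdot_eq0l // -pnorm_sq p0 expr0n.
have [q0|q0] := eqVneq (pnorm q) 0.
  by rewrite q0 mulr0 pdotC pdot_eq0l // -pnorm_sq q0 expr0n.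
have pq0 : 0 < pnorm p * pnorm q by rewrite mulr_gt0 // lt0r ?p0 ?q0 pnorm_ge0.
have := pdot_ge0 (psub (pscale (pnorm q) p) (pscale (pnorm p) q)).
rewrite !pdotBl !pdotBr !pdotZl !pdotZr -!pnorm_sq (pdotC q p) => h.
rewrite -(ler_pM2l pq0); nra.
Qed.

Lemma pdot_ge_pnormM (p q : profile) : - (pnorm p * pnorm q) <= pdot p q.
Proof.
have := pdot_le_pnormM (pscale (-1) p) q; rewrite pdotZl mulN1r lerNl.
by rewrite (_ : pnorm (pscale (-1) p) = pnorm p) // /pnorm pdotZl pdotZr mulrA mulrNN !mul1r.
Qed.

Lemma pnormB_sym (p q : profile) : pnorm (psub p q) = pnorm (psub q p).
Proof. by rewrite /pnorm !pdotBl !pdotBr (pdotC p q); congr Num.sqrt; ring. Qed.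

Lemma pdot_psubC (r p q : profile) : pdot r (psub p q) = - pdot r (psub q p).
Proof. by rewrite !pdotBr opprB. Qed.

Lemma pnormB_split (p q r : profile) :
  pnorm (psub p r) ^+ 2
  = pnorm (psub p q) ^+ 2 + pnorm (psub q r) ^+ 2 + 2 * pdot (psub p q) (psub q r).
Proof.
by rewrite !pnorm_sq !pdotBl !pdotBr (pdotC q p) (pdotC r p) (pdotC r q); ring.
Qed.

End InnerProduct.

Section Deviation.
Variables (R : realType) (N : nat) (d : 'I_N -> nat).
Local Notation strat := (strat R d).
Local Notation profile := (profile R d).

Lemma upd_in (p : profile) i (x : strat i) : upd p x i = x.
Proof. exact: dfwith_in. Qed.

Lemma upd_out (p : profile) i (x : strat i) j : i != j -> upd p x j = p j.
Proof. exact: dfwith_out. Qed.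

Lemma upd_id (p : profile) i : upd p (p i) = p.
Proof.
apply: functional_extensionality_dep => j.
by have [<-|ij] := eqVneq i j; [rewrite upd_in | rewrite upd_out].
Qed.

Lemma sum_upd_psub (F : forall j, strat j -> R) (p : profile) i (x y : strat i) :
  (forall j, F j 0 = 0) -> \sum_(j < N) F j (upd p x j - upd p y j) = F i (x - y).
Proof.
move=> F0; rewrite (bigD1 i) //= !upd_in big1 ?addr0 // => j ji.
by rewrite !upd_out 1?eq_sym // subrr F0.
Qed.

Lemma pdot_upd_psub (r p : profile) i (x y : strat i) :
  pdot r (psub (upd p x) (upd p y)) = sdot (r i) (x - y).
Proof. exact: (@sum_upd_psub (fun j => @sdot R N d j (r j))) (fun j => sdot0r _). Qed.

Lemma pnorm_upd_psub (p : profile) i (x y : strat i) :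
  pnorm (psub (upd p x) (upd p y)) = snorm (x - y).
Proof. by rewrite /pnorm /pdot (@sum_upd_psub (fun j z => sdot z z)) // => j; exact: sdot0l. Qed.

Variable Xs : forall i : 'I_N, set (strat i).
Arguments Xs : clear implicits.

Lemma inX_upd (p : profile) i (x : strat i) : inX Xs p -> Xs i x -> inX Xs (upd p x).
Proof.
move=> hp hx j.
by have [<-|ij] := eqVneq i j; [rewrite upd_in | rewrite upd_out].
Qed.

Definition seg (p : profile) i (x : strat i) (t : R) : profile :=
  upd p (p i + t *: (x - p i)).

Lemma seg0 (p : profile) i (x : strat i) : seg p x 0 = p.
Proof. by rewrite /seg scale0r addr0 upd_id. Qed.

Lemma seg1 (p : profile) i (x : strat i) : seg p x 1 = upd p x.
Proof. by rewrite /seg scale1r addrC subrK. Qed.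

Lemma seg_psub (p : profile) i (x : strat i) s t :
  (p i + s *: (x - p i)) - (p i + t *: (x - p i)) = (s - t) *: (x - p i).
Proof. by rewrite opprD addrACA subrr add0r -scalerBl. Qed.

Lemma inX_seg (p : profile) i (x : strat i) t :
  convex_set (Xs i : set (convex_lmodType 'rV[R]_(d i))) ->
  inX Xs p -> Xs i x -> 0 <= t -> t <= 1 -> inX Xs (seg p x t).
Proof.
move=> hc hp hx t0 t1; apply: inX_upd => //.
have := hc x (p i) (Itv01 t0 t1) (mem_set hx) (mem_set (hp i)); rewrite inE /=.
by rewrite /conv /= /unstable.onem scalerBl scale1r scalerBr addrCA.
Qed.

End Deviation.

Section DeriveOnUnitInterval.
Variable R : realType.

Definition is_derive01 (f phi : R -> R) : Prop :=
  forall t, 0 <= t -> t <= 1 -> forall e, 0 < e -> exists2 dl, 0 < dl &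
    forall s, 0 <= s -> s <= 1 -> `|s - t| < dl ->
      `|f s - f t - (s - t) * phi t| <= e * `|s - t|.

Variables (f phi : R -> R).
Hypothesis fphi : is_derive01 f phi.

Lemma is_derive01_is_derive (t : R) : 0 < t -> t < 1 -> is_derive t 1 f (phi t).
Proof.
move=> t0 t1.
suff H : (fun h : R => h^-1 *: ((f \o shift t) (h *: 1) - f t)) @ 0^' --> phi t.
  by apply: DeriveDef; [exact: cvgP H | exact: cvg_lim H].
apply/cvgrPdist_le => e e0.
have [dl dl0 Hd] := fphi (ltW t0) (ltW t1) e0.
rewrite near_withinE; apply/nbhs_ballP.
exists (Num.min dl (Num.min t (1 - t))); first by rewrite /= !lt_min dl0 t0 subr_gt0 t1.
move=> h /=; rewrite /ball /= sub0r normrN !lt_min => /and3P [hd ht h1t] h0.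
have Hh : `|f (h + t) - f t - h * phi t| <= e * `|h|.
  have := Hd (h + t); rewrite addrK; apply=> //;
    have := ler_norm h; have := ler_norm (- h); rewrite normrN; lra.
rewrite /GRing.scale /= mulr1 -(@ler_pM2l _ `|h|) ?normr_gt0 //.
by rewrite -normrM mulrBr mulrA mulfV // mul1r distrC [_ * e]mulrC.
Qed.

Lemma is_derive01_continuous : {within `[0, 1], continuous f}.
Proof.
apply/subspace_continuousP => t; rewrite /= in_itv /= => /andP [t0 t1].
have [dl dl0 Hd] := fphi t0 t1 ltr01.
apply/cvgrPdist_le => e e0; rewrite near_withinE; apply/nbhs_ballP.
exists (Num.min dl (e / (1 + `|phi t|))).
  by rewrite /= lt_min dl0 divr_gt0 // ltr_wpDr.
move=> s /=; rewrite /ball /= lt_min distrC => /andP [hd he].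
rewrite in_itv /= => /andP [s0 s1]; rewrite distrC.
have := Hd s s0 s1 hd; rewrite mul1r => Hs.
have : `|(s - t) * phi t| <= `|s - t| * `|phi t| by rewrite normrM.
have : `|s - t| * (1 + `|phi t|) <= e by rewrite -ler_pdivlMr ?ltW ?ltr_wpDr.
have := ler_normB (f s - f t - (s - t) * phi t) (- ((s - t) * phi t)).
rewrite opprK normrN subrK; nra.
Qed.

Lemma is_derive01_le_nonincr :
  (forall s t : R, 0 <= s -> s <= t -> t <= 1 -> phi t <= phi s) -> f 1 - f 0 <= phi 0.
Proof.
move=> phi_decr.
have der (t : R) : t \in `]0, 1[ -> is_derive t 1 f (phi t).
  by rewrite in_itv /= => /andP [t0 t1]; exact: is_derive01_is_derive.
have [c c01 ->] := MVT ltr01 der is_derive01_continuous.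
by move: c01; rewrite in_itv /= subr0 mulr1 => /andP [c0 c1]; apply: phi_decr; lra.
Qed.

Lemma is_derive01_le_of_max (a b : R) :
  (forall t : R, 0 < t -> t <= 1 -> f t - f 0 <= t * a + t ^+ 2 * b) -> phi 0 <= a.
Proof.
move=> fmax; apply/ler_addgt0Pr => e e0.
have [dl dl0 Hd] := fphi (lexx 0) ler01 (divr_gt0 e0 (ltr0n _ 2)).
pose t := Num.min 1 (Num.min (dl / 2) (e / (2 * (`|b| + 1)))).
have b1 : 0 < 2 * (`|b| + 1) by rewrite mulr_gt0 // ltr_wpDl.
have t0 : 0 < t by rewrite !lt_min ltr01 !divr_gt0.
have t1 : t <= 1 by rewrite ge_min lexx.
have tdl : t < dl by rewrite !gt_min ltr_pdivrMr //= orbC ltr_pMr ?ltr1n.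
have tb : t * (`|b| + 1) <= e / 2.
  have : t <= e / (2 * (`|b| + 1)) by rewrite !ge_min lexx !orbT.
  rewrite ler_pdivlMr //; lra.
have Ht : t * phi 0 - (f t - f 0) <= e / 2 * t.
  have := Hd t (ltW t0) t1; rewrite subr0 gtr0_norm // -normrN opprB => /(_ tdl).
  exact/le_trans/ler_norm.
have tb2 : t ^+ 2 * b <= t * (e / 2).
  have := ler_norm b; rewrite expr2 -mulrA ler_pM2l //; nra.
have := fmax t t0 t1; rewrite -(ler_pM2l t0 (phi 0)); lra.
Qed.

End DeriveOnUnitInterval.

Section Game.
Variables (R : realType) (N : nat) (d : 'I_N -> nat).
Local Notation strat := (strat R d).
Local Notation profile := (profile R d).
Variables (Xs : forall i : 'I_N, set (strat i)) (v : 'I_N -> profile -> R)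
  (gradv : 'I_N -> profile -> profile).
Arguments Xs : clear implicits.
Hypotheses (Xs_ok : strategy_sets_ok Xs) (v_grad : is_gradient Xs v gradv).

Lemma inX_seg_ok (p : profile) i (x : strat i) (t : R) :
  inX Xs p -> Xs i x -> 0 <= t -> t <= 1 -> inX Xs (seg p x t).
Proof. exact: inX_seg (Xs_ok i).2.2. Qed.

Lemma is_derive01_seg (p : profile) i (x : strat i) : inX Xs p -> Xs i x ->
  is_derive01 (fun t => v i (seg p x t)) (fun t => sdot (gradv i (seg p x t) i) (x - p i)).
Proof.
move=> pX xX t t0 t1 e e0; set w := x - p i.
have w0 : 0 < snorm w + 1 by rewrite ltr_wpDl ?sqrtr_ge0.
have [dl dl0 Hd] := v_grad i (inX_seg_ok pX xX t0 t1) (divr_gt0 e0 w0).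
exists (dl / (snorm w + 1)) => [|s s0 s1]; first exact: divr_gt0.
rewrite ltr_pdivlMr // => hst.
have hpn : pnorm (psub (seg p x s) (seg p x t)) = `|s - t| * snorm w.
  by rewrite pnorm_upd_psub seg_psub /snorm sdotZl sdotZr mulrA -expr2 sqrtrM
    ?sqr_ge0 // sqrtr_sqr.
have := Hd _ (inX_seg_ok pX xX s0 s1); rewrite hpn pdot_upd_psub seg_psub sdotZr.
have ws : `|s - t| * snorm w <= `|s - t| * (snorm w + 1) by rewrite ler_wpM2l // lerDl.
move=> /(_ (le_lt_trans ws hst)) /le_trans; apply.
have eW : e / (snorm w + 1) * snorm w <= e.
  by rewrite mulrAC ler_pdivrMr // ler_pM2l // lerDl.
have := normr_ge0 (s - t); nra.
Qed.

Lemma GdistD i (y z w : strat i) (t : R) :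
  Gdist (y + t *: w) z = Gdist y z + t * sdot (y - z) w + 2^-1 * t ^+ 2 * sdot w w.
Proof.
rewrite /Gdist !snorm_sq addrAC; move: (y - z) => u.
by rewrite sdotDl !sdotDr !sdotZl !sdotZr (sdotC w); field.
Qed.

Lemma best_response_vi (mu : R) (s p : profile) i : 0 <= mu -> inX Xs p ->
  (forall x, Xs i x ->
     v i (upd p x) - mu * Gdist x (s i) <= v i p - mu * Gdist (p i) (s i)) ->
  forall x, Xs i x -> sdot (gradv i p i) (x - p i) <= mu * sdot (p i - s i) (x - p i).
Proof.
move=> mu0 pX p_opt x xX; set w := x - p i.
have := is_derive01_le_of_max (is_derive01_seg pX xX)
  (a := mu * sdot (p i - s i) w) (b := mu * 2^-1 * sdot w w).
rewrite /= seg0; apply=> t t0 t1.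
have := p_opt _ (inX_seg_ok pX xX (ltW t0) t1 i); rewrite /seg upd_in GdistD -/w.
have := sdot_ge0 w; nra.
Qed.

Hypothesis v_mono : monotone_game Xs gradv.

Lemma deviation_gain_le (p : profile) i (x : strat i) : inX Xs p -> Xs i x ->
  v i (upd p x) - v i p <= sdot (gradv i p i) (x - p i).
Proof.
move=> pX xX; set w := x - p i.
have := is_derive01_le_nonincr (is_derive01_seg pX xX); rewrite /= seg0 seg1.
apply=> s t s0 st t1; have [-> //|s_neq_t] := eqVneq s t.
have := v_mono (inX_seg_ok pX xX (le_trans s0 st) t1) (inX_seg_ok pX xX s0 (le_trans st t1)).
rewrite (sum_upd_psub (F := fun j => @sdot R N d j
  (gradv j (seg p x t) j - gradv j (seg p x s) j))) => [|j]; last exact: sdot0r.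
rewrite seg_psub sdotZr sdotBl -/w.
have : 0 < t - s by rewrite subr_gt0 lt_def eq_sym s_neq_t st.
nra.
Qed.

End Game.

Section ProfileVariationalInequalities.
Variables (R : realType) (N : nat) (d : 'I_N -> nat).
Local Notation strat := (strat R d).
Local Notation profile := (profile R d).
Variables (Xs : forall i : 'I_N, set (strat i)) (v : 'I_N -> profile -> R)
  (gradv : 'I_N -> profile -> profile).
Arguments Xs : clear implicits.
Hypotheses (Xs_ok : strategy_sets_ok Xs) (v_grad : is_gradient Xs v gradv).

Definition pgrad (p : profile) : profile := fun i => gradv i p i.

Lemma perturbed_eq_vi (mu : R) (s m y : profile) : 0 <= mu ->
  perturbed_eq Xs v mu s m -> inX Xs y ->
  pdot (pgrad m) (psub y m) <= mu * pdot (psub m s) (psub y m).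
Proof.
move=> mu0 [mX m_opt] yX; rewrite /pdot mulr_sumr; apply: ler_sum => i _.
exact: (best_response_vi Xs_ok v_grad mu0 mX (m_opt i) (yX i)).
Qed.

Lemma nash_eq_perturbed_eq0 (p : profile) : nash_eq Xs v p -> perturbed_eq Xs v 0 p p.
Proof. by case=> pX p_opt; split=> // i x xX; rewrite !mul0r !subr0; exact: p_opt. Qed.

Lemma nash_eq_vi (p y : profile) : nash_eq Xs v p -> inX Xs y ->
  pdot (pgrad p) (psub y p) <= 0.
Proof.
by move=> /nash_eq_perturbed_eq0 p0 yX; rewrite -(mul0r (pdot (psub p p) (psub y p)));
  exact: perturbed_eq_vi.
Qed.

Lemma pgrad_lipschitz (L : R) (p q : profile) : 0 <= L -> smooth_game Xs L gradv ->
  inX Xs p -> inX Xs q -> pnorm (psub (pgrad p) (pgrad q)) <= L * pnorm (psub p q).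
Proof.
move=> L0 v_smooth pX qX; rewrite pnorm_sum -(@ger0_norm _ (L * _)) ?mulr_ge0 ?pnorm_ge0 //.
by rewrite -sqrtr_sqr ler_wsqrtr // exprMn; exact: v_smooth.
Qed.

Lemma pgrad_bounded (zeta : R) (p : profile) :
  (forall q, inX Xs q -> Num.sqrt (\sum_(i < N) snorm (gradv i q i) ^+ 2) <= zeta) ->
  inX Xs p -> pnorm (pgrad p) <= zeta.
Proof. by move=> zetaP pX; rewrite pnorm_sum; exact: zetaP. Qed.

Lemma exploit_le (C : R) (s : profile) : monotone_game Xs gradv -> inX Xs s ->
  (forall y, inX Xs y -> pdot (pgrad s) (psub y s) <= C) -> exploit Xs v s <= C.
Proof.
move=> v_mono sX sC.
have dev_le i (x : strat i) : Xs i x -> v i (upd s x) - v i s <= sdot (pgrad s i) (x - s i).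
  exact: (deviation_gain_le Xs_ok v_grad v_mono sX).
have supP i : has_sup [set v i (upd s x) | x in Xs i].
  split; first by have [x xX] := (Xs_ok i).1; exists (v i (upd s x)), x.
  exists (v i s + C) => _ [x xX <-]; have := dev_le i x xX.
  have := sC _ (inX_upd sX xX); rewrite -[X in psub _ X](upd_id s i) pdot_upd_psub.
  lra.
apply/ler_addgt0Pr => e e0; pose e' := e / (N%:R + 1).
have e'0 : 0 < e' by rewrite divr_gt0 // ltr_wpDl.
have near_sup i : exists x, Xs i x /\ sup [set v i (upd s x) | x in Xs i] - e' < v i (upd s x).
  by have [_ [x xX <-] ?] := sup_adherent e'0 (supP i); exists x.
pose y : profile := fun i => projT1 (cid (near_sup i)).
have yP i : Xs i (y i) /\ sup [set v i (upd s x) | x in Xs i] - e' < v i (upd s (y i)).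
  exact: projT2 (cid (near_sup i)).
have := sC y (fun i => (yP i).1); rewrite /exploit /pdot => yC.
apply: le_trans (_ : \sum_(i < N) (sdot (pgrad s i) (psub y s i) + e') <= C + e).
  by apply: ler_sum => i _; have := dev_le i _ (yP i).1; have := (yP i).2; rewrite /psub; lra.
rewrite big_split /= sumr_const card_ord -mulr_natr.
have : e' * N%:R <= e by rewrite /e' mulrAC ler_pdivrMr ?ltr_wpDl // ler_pM2l // lerDl.
lra.
Qed.

End ProfileVariationalInequalities.

Section Diameter.
Variables (R : realType) (N : nat) (d : 'I_N -> nat).
Variable Xs : forall i : 'I_N, set (strat R d i).
Arguments Xs : clear implicits.
Hypothesis Xs_ok : strategy_sets_ok Xs.

Lemma inX_nonempty : exists p : profile R d, inX Xs p.
Proof. by exists (fun i => projT1 (cid (Xs_ok i).1)) => i; exact: projT2 (cid _). Qed.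

Lemma inX_bounded : exists B, forall p q : profile R d,
  inX Xs p -> inX Xs q -> pnorm (psub p q) <= B.
Proof.
have /choice [M HM] i : exists M : R, forall x, Xs i x -> `|x| <= M.
  have [M [_ HM]] := compact_bounded (Xs_ok i).2.1.
  by exists (M + 1) => x xX; apply: HM => //; lra.
exists (Num.sqrt (\sum_(i < N) \sum_(j < d i) (2 * M i) ^+ 2)) => p q pX qX.
rewrite ler_wsqrtr //; apply: ler_sum => i _; apply: ler_sum => j _; rewrite !mxE.
have entry_le (x : strat R d i) : Xs i x -> `|x 0 j| <= M i.
  move=> /HM; apply: le_trans; rewrite [leRHS]mx_normrE.
  exact: (le_bigmax _ (fun ij : 'I_1 * 'I_(d i) => `|x ij.1 ij.2|) (0, j)).
move: (entry_le _ (pX i)) (entry_le _ (qX i)); rewrite !ler_norml; nra.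
Qed.

Lemma pnorm_le_diamX (p q : profile R d) : inX Xs p -> inX Xs q ->
  pnorm (psub p q) <= diamX Xs.
Proof.
move=> pX qX; have [B HB] := inX_bounded.
apply: sup_upper_bound; last by exists (p, q).
split; first by exists (pnorm (psub p q)), (p, q).
by exists B => _ [[p' q'] [p'X q'X] <-]; exact: HB.
Qed.

Lemma diamX_ge0 : 0 <= diamX Xs.
Proof. by have [p pX] := inX_nonempty; exact: le_trans (pnorm_ge0 _) (pnorm_le_diamX pX pX). Qed.

End Diameter.

Section Recurrences.
Variable R : realFieldType.

Lemma expr1D_le (x : R) n : 0 <= x -> n%:R * x <= 1 / 2 ->
  (1 + x) ^+ n <= 1 + 2 * n%:R * x.
Proof.
move=> x0; elim: n => [|n IHn]; first by rewrite expr0 mulr0 mul0r addr0.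
rewrite exprS -addn1 natrD => nx.
have := IHn ltac:(nra); rewrite -(ler_pM2l (_ : 0 < 1 + x)); last lra.
have : 2 * n%:R * x * x <= x by nra.
nra.
Qed.

Lemma descent_sum_le (K : nat) (a : R) (E r : nat -> R) : 0 <= a ->
  (forall k, (k < K)%N -> E k.+1 <= (1 + a) * E k - r k ^+ 2) ->
  forall n, (n <= K)%N -> E n + \sum_(j < n) r j ^+ 2 <= (1 + a) ^+ n * E 0%N.
Proof.
move=> a0 E_step; elim=> [|n IHn] nK; first by rewrite big_ord0 expr0 mul1r addr0.
have S0 : 0 <= \sum_(j < n) r j ^+ 2 by apply: sumr_ge0 => j _; exact: sqr_ge0.
have := IHn (ltnW nK); rewrite -(ler_pM2l (_ : 0 < 1 + a)); last lra.
rewrite big_ord_recr /= [(1 + a) ^+ _.+1]exprS -mulrA.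
have := E_step n nK; have := mulr_ge0 a0 S0; nra.
Qed.

Lemma geometric_growth_le (K : nat) (b : R) (r : nat -> R) : 0 <= b ->
  (forall k, (k.+1 < K)%N -> r k.+1 <= (1 + b) * r k) ->
  forall n j, (j + n < K)%N -> r (j + n)%N <= (1 + b) ^+ n * r j.
Proof.
move=> b0 r_step; elim=> [|n IHn] j jnK; first by rewrite addn0 expr0 mul1r.
rewrite addnS exprS -mulrA in jnK *; apply: le_trans (r_step _ jnK) _.
by rewrite ler_pM2l ?IHn 1?ltnW //; lra.
Qed.

Lemma last_residual_le (K : nat) (dl : R) (E r : nat -> R) :
  (0 < K)%N -> 0 <= dl -> K%:R * dl <= 1 / 64 ->
  (forall k, 0 <= r k) -> (forall k, 0 <= E k) ->
  (forall k, (k < K)%N -> E k.+1 <= (1 + 3 * dl) * E k - r k ^+ 2) ->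
  (forall k, (k.+1 < K)%N -> r k.+1 <= (1 + 2 * dl) * r k) ->
  K%:R * r K.-1 ^+ 2 <= 8 * E 0%N.
Proof.
move=> K0 dl0 Kdl r0 E0 E_step r_step.
have sum_le : \sum_(j < K) r j ^+ 2 <= 2 * E 0%N.
  have := descent_sum_le (a := 3 * dl) ltac:(lra) E_step (leqnn K).
  have : (1 + 3 * dl) ^+ K <= 2 by apply: le_trans (expr1D_le _ _) _; nra.
  have := E0 K; have := E0 0%N; nra.
have last_le (j : 'I_K) : r K.-1 ^+ 2 <= 4 * r j ^+ 2.
  have jK : (j + (K.-1 - j) = K.-1)%N by have := ltn_ord j; lia.
  have := geometric_growth_le (b := 2 * dl) ltac:(lra) r_step (n := (K.-1 - j)%N) (j := j).
  rewrite jK prednK // => /(_ (leqnn _)) rj.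
  have nK : (K.-1 - j)%:R <= K%:R :> R by rewrite ler_nat; lia.
  have : (1 + 2 * dl) ^+ (K.-1 - j) <= 2 by apply: le_trans (expr1D_le _ _) _; nra.
  move=> /(ler_wpM2r (r0 j)) /(le_trans rj) rKj.
  by have := r0 K.-1; nra.
have : \sum_(j < K) r K.-1 ^+ 2 <= \sum_(j < K) 4 * r j ^+ 2.
  by apply: ler_sum => j _; exact: last_le.
by rewrite sumr_const card_ord -mulr_sumr -mulr_natl; lra.
Qed.

End Recurrences.

Section ProximalPoint.
Variables (R : realType) (N : nat) (d : 'I_N -> nat).
Local Notation profile := (profile R d).
Variables (Xs : forall i : 'I_N, set (strat R d i)) (v : 'I_N -> profile -> R)
  (gradv : 'I_N -> profile -> profile).
Arguments Xs : clear implicits.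
Hypotheses (Xs_ok : strategy_sets_ok Xs) (v_grad : is_gradient Xs v gradv)
  (v_mono : monotone_game Xs gradv).
Variable mu : R.
Hypothesis mu_gt0 : 0 < mu.

Local Notation pgrad := (pgrad gradv).

Lemma nash_perturbed_pythagoras (s m ps : profile) :
  perturbed_eq Xs v mu s m -> nash_eq Xs v ps ->
  pnorm (psub ps m) ^+ 2 + pnorm (psub m s) ^+ 2 <= pnorm (psub ps s) ^+ 2.
Proof.
move=> m_eq ps_eq; have [mX psX] := (m_eq.1, ps_eq.1).
have vi_m := perturbed_eq_vi Xs_ok v_grad (ltW mu_gt0) m_eq psX.
have vi_ps := nash_eq_vi Xs_ok v_grad ps_eq mX.
have mono : pdot (psub (pgrad m) (pgrad ps)) (psub m ps) <= 0 := v_mono mX psX.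
rewrite pdotBl in mono.
rewrite (pdot_psubC (pgrad m)) in vi_m.
have : 0 <= pdot (psub m s) (psub ps m).
  by rewrite -(pmulr_rge0 _ mu_gt0); lra.
rewrite (pnormB_split ps m s) (pdotC (psub ps m)); lra.
Qed.

Lemma nash_dist_step (dl : R) (s s' m ps : profile) :
  perturbed_eq Xs v mu s m -> nash_eq Xs v ps -> 0 <= dl -> dl <= 1 ->
  pnorm (psub m s') <= pnorm (psub m s) * dl ->
  pnorm (psub ps s') ^+ 2 <= (1 + 3 * dl) * pnorm (psub ps s) ^+ 2 - pnorm (psub m s) ^+ 2.
Proof.
move=> m_eq ps_eq dl0 dl1 m_s'.
have pyth := nash_perturbed_pythagoras m_eq ps_eq.
have := pdot_le_pnormM (psub ps m) (psub m s'); rewrite (pnormB_split ps m s').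
move: pyth m_s' (pnorm_ge0 (psub ps m)) (pnorm_ge0 (psub m s)) (pnorm_ge0 (psub m s'))
  (pnorm_ge0 (psub ps s)).
set P := pnorm (psub ps m); set r := pnorm (psub m s); set e := pnorm (psub m s').
set D := pnorm (psub ps s) => pyth m_s' P0 r0 e0 D0 cs.
have PD : P <= D by nra.
have rD : r <= D by nra.
have eD : e <= dl * D by have := ler_wpM2r dl0 rD; nra.
have : P * e <= D * (dl * D) by apply: ler_pM.
have : e * e <= (dl * D) * (dl * D) by apply: ler_pM.
have : dl * dl * (D * D) <= dl * (D * D) by apply: ler_wpM2r; nra.
nra.
Qed.

Lemma perturbed_residual_step (dl : R) (s s' m m' : profile) :
  perturbed_eq Xs v mu s m -> perturbed_eq Xs v mu s' m' -> 0 <= dl ->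
  pnorm (psub m s') <= pnorm (psub m s) * dl ->
  pnorm (psub m' s') <= (1 + 2 * dl) * pnorm (psub m s).
Proof.
move=> m_eq m'_eq dl0 m_s'; have [mX m'X] := (m_eq.1, m'_eq.1).
have vi_m := perturbed_eq_vi Xs_ok v_grad (ltW mu_gt0) m_eq m'X.
have vi_m' := perturbed_eq_vi Xs_ok v_grad (ltW mu_gt0) m'_eq mX.
have mono : pdot (psub (pgrad m') (pgrad m)) (psub m' m) <= 0 := v_mono m'X mX.
rewrite pdotBl in mono.
rewrite (pdot_psubC (pgrad m')) (pdot_psubC (psub m' s')) mulrN in vi_m'.
have : pdot (psub m' s') (psub m' m) <= pdot (psub m s) (psub m' m).
  by rewrite -(ler_pM2l mu_gt0); lra.
rewrite (_ : psub m' m = psub (psub m' s') (psub m s')); last first.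
  by apply: functional_extensionality_dep => i; rewrite /psub opprB addrA subrK.
rewrite !(pdotBr (psub m' s') (psub m s')) -pnorm_sq => key.
have := pdot_le_pnormM (psub m s) (psub m' s'); have := pdot_le_pnormM (psub m' s') (psub m s').
have := pdot_ge_pnormM (psub m s) (psub m s').
move: key m_s' (pnorm_ge0 (psub m' s')) (pnorm_ge0 (psub m s)) (pnorm_ge0 (psub m s')).
set a := pnorm (psub m' s'); set b := pnorm (psub m s); set e := pnorm (psub m s').
move=> key m_s' a0 b0 e0 c1 c2 c3.
have quad : a ^+ 2 <= a * b + b * e + a * e by lra.
have : a <= b + 2 * e.
  rewrite leNgt; apply/negP => lt_a.
  have : 0 < (a - b - 2 * e) * (a + e) by apply: mulr_gt0; lra.
  have := sqr_ge0 e; nra.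
nra.
Qed.

Lemma perturbed_gap_le (L zeta r : R) (s0 m s : profile) :
  0 <= L -> smooth_game Xs L gradv ->
  (forall q, inX Xs q -> Num.sqrt (\sum_(i < N) snorm (gradv i q i) ^+ 2) <= zeta) ->
  perturbed_eq Xs v mu s0 m -> inX Xs s ->
  pnorm (psub m s0) <= r -> pnorm (psub m s) <= r ->
  forall y, inX Xs y -> pdot (pgrad s) (psub y s) <= ((mu + L) * diamX Xs + zeta) * r.
Proof.
move=> L0 v_smooth zetaP m_eq sX m_s0 m_s y yX; have mX := m_eq.1.
have -> : pdot (pgrad s) (psub y s) = pdot (psub (pgrad s) (pgrad m)) (psub y s)
    + pdot (pgrad m) (psub y m) + pdot (pgrad m) (psub m s).
  by rewrite !pdotBl !pdotBr; ring.
have gap_s : pdot (psub (pgrad s) (pgrad m)) (psub y s) <= L * r * diamX Xs.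
  apply: le_trans (pdot_le_pnormM _ _) _; apply: ler_pM; rewrite ?pnorm_ge0 //.
    apply: le_trans (pgrad_lipschitz L0 v_smooth sX mX) _.
    by rewrite pnormB_sym ler_wpM2l.
  exact: pnorm_le_diamX.
have gap_m : pdot (pgrad m) (psub y m) <= mu * (r * diamX Xs).
  apply: le_trans (perturbed_eq_vi Xs_ok v_grad (ltW mu_gt0) m_eq yX) _.
  rewrite ler_pM2l //; apply: le_trans (pdot_le_pnormM _ _) _.
  by apply: ler_pM; rewrite ?pnorm_ge0 // pnorm_le_diamX.
have drift : pdot (pgrad m) (psub m s) <= zeta * r.
  apply: le_trans (pdot_le_pnormM _ _) _.
  by apply: ler_pM; rewrite ?pnorm_ge0 // (pgrad_bounded zetaP mX).
lra.
Qed.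

Lemma proximal_residual_sqr_le (K : nat) (dl : R) (sigma pmu : nat -> profile) (ps : profile) :
  (0 < K)%N -> 0 <= dl -> dl <= 1 -> K%:R * dl <= 1 / 64 ->
  (forall k, (k < K)%N -> perturbed_eq Xs v mu (sigma k) (pmu k)) ->
  (forall k, (k < K)%N ->
     pnorm (psub (pmu k) (sigma k.+1)) <= pnorm (psub (pmu k) (sigma k)) * dl) ->
  nash_eq Xs v ps ->
  K%:R * pnorm (psub (pmu K.-1) (sigma K.-1)) ^+ 2 <= 8 * pnorm (psub ps (sigma 0%N)) ^+ 2.
Proof.
move=> K0 dl0 dl1 Kdl pmu_eq pmu_close ps_eq.
apply: (last_residual_le (E := fun k => pnorm (psub ps (sigma k)) ^+ 2)
  (r := fun k => pnorm (psub (pmu k) (sigma k))) K0 dl0 Kdl).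
- by move=> k; exact: pnorm_ge0.
- by move=> k; exact: sqr_ge0.
- by move=> k kK; exact: nash_dist_step (pmu_eq k kK) ps_eq dl0 dl1 (pmu_close k kK).
- move=> k kK; have kK' := ltnW kK.
  exact: perturbed_residual_step (pmu_eq k kK') (pmu_eq _ kK) dl0 (pmu_close k kK').
Qed.

End ProximalPoint.

Lemma contraction_rate_bounds (R : realType) (c T : R) (K : nat) : 1 < c -> (1 <= K)%N ->
  Num.max (3 / ln c * ln K%:R + ln 64 / ln c) 1 <= T ->
  [/\ 0 <= c `^ (- T), c `^ (- T) <= 1 & K%:R * c `^ (- T) <= 1 / 64].
Proof.
move=> c1 K1; rewrite ge_max => /andP [T_ln _].
have lnc0 : 0 < ln c by apply: ln_gt0.
have K1R : 1 <= K%:R :> R by rewrite ler1n.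
have lnK0 : 0 <= ln (K%:R : R) by apply: ln_ge0.
have ln64 : 0 <= ln (64 : R) by apply: ln_ge0; lra.
have T_lnc : ln (K%:R : R) + ln 64 <= T * ln c.
  apply: le_trans (_ : 3 * ln (K%:R : R) + ln 64 <= _); first lra.
  have <- : (3 / ln c * ln (K%:R : R) + ln 64 / ln c) * ln c = 3 * ln (K%:R : R) + ln 64.
    by field; rewrite gt_eqF.
  by rewrite ler_pM2r.
have -> : c `^ (- T) = expR (- (T * ln c)) by rewrite /powR gt_eqF ?mulNr //; lra.
split; first exact: expR_ge0.
  by rewrite -expR0 ler_expR; nra.
have : expR (- (T * ln c)) <= expR (- (ln (K%:R : R) + ln 64)) by rewrite ler_expR; lra.
rewrite [X in _ <= X]expRN expRD !lnK ?posrE; [|lra|lra].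
rewrite -(ler_pM2l (_ : 0 < K%:R :> R)); last lra.
by rewrite invfM mulrA mulfV ?gt_eqF // ?mul1r; lra.
Qed.

Lemma mul_le_sqrt_rate (R : realType) (C r Y : R) (K : nat) : 0 <= C -> 0 <= r -> (0 < K)%N ->
  K%:R * r ^+ 2 <= 8 * Y -> C * r <= 2 * Num.sqrt 2 * C / Num.sqrt K%:R * Num.sqrt Y.
Proof.
move=> C0 r0 K0 Kr; have K0R : 0 < K%:R :> R by rewrite ltr0n.
have Y0 : 0 <= Y by have := mulr_ge0 (ltW K0R) (sqr_ge0 r); lra.
set B := 2 * Num.sqrt 2 / Num.sqrt K%:R * Num.sqrt Y.
have B0 : 0 <= B by rewrite !mulr_ge0 ?invr_ge0 ?sqrtr_ge0.
have B2 : B ^+ 2 = 8 * Y / K%:R.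
  by rewrite !exprMn exprVn !sqr_sqrtr ?ler0n //; field; rewrite gt_eqF.
have : r ^+ 2 <= B ^+ 2 by rewrite B2 ler_pdivlMr // mulrC.
rewrite (_ : 2 * _ * C / _ * _ = C * B); last by rewrite /B; ring.
by move=> rB; rewrite ler_wpM2l //; nra.
Qed.

Theorem theorem6 (R : realType) (N : nat) (d : 'I_N -> nat)
  (Xs : forall i : 'I_N, set (strat R d i))
  (v : 'I_N -> profile R d -> R)
  (gradv : 'I_N -> profile R d -> profile R d)
  (L zeta mu c T_sigma : R) (K : nat)
  (sigma pmu : nat -> profile R d) (pstar : profile R d) :
  strategy_sets_ok Xs ->
  is_gradient Xs v gradv ->
  monotone_game Xs gradv ->
  0 <= L -> smooth_game Xs L gradv ->
  (forall p, inX Xs p ->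
     Num.sqrt (\sum_(i < N) (snorm (gradv i p i)) ^+ 2) <= zeta) ->
  0 < mu ->
  (1 <= K)%N ->
  1 < c ->
  Num.max (3 / ln c * ln K%:R + ln 64 / ln c) 1 <= T_sigma ->
  (forall k, (k <= K)%N -> inX Xs (sigma k)) ->
  (forall k, (k < K)%N -> perturbed_eq Xs v mu (sigma k) (pmu k)) ->
  (forall k, (k < K)%N ->
     pnorm (psub (pmu k) (sigma k.+1))
       <= pnorm (psub (pmu k) (sigma k)) * c `^ (- T_sigma)) ->
  nash_eq Xs v pstar ->
  exploit Xs v (sigma K)
    <= 2 * Num.sqrt 2 * ((mu + L) * diamX Xs + zeta) / Num.sqrt K%:R
       * Num.sqrt (pnorm (psub pstar (sigma 0%N))
                   * (8 * pnorm (psub pstar (sigma 0%N)) + zeta / mu)).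
Proof.
move=> Xs_ok v_grad v_mono L0 v_smooth zetaP mu0 K1 c1 T_ge sigmaX pmu_eq pmu_close ps_eq.
have [dl0 dl1 Kdl] := contraction_rate_bounds c1 K1 T_ge.
have residual := proximal_residual_sqr_le Xs_ok v_grad v_mono mu0 K1 dl0 dl1 Kdl pmu_eq
  pmu_close ps_eq.
have K1K : (K.-1 < K)%N by rewrite prednK.
have [p0 p0X] := inX_nonempty Xs_ok.
have zeta0 : 0 <= zeta := le_trans (sqrtr_ge0 _) (zetaP p0 p0X).
have D0 := pnorm_ge0 (psub pstar (sigma 0%N)).
apply: le_trans (mul_le_sqrt_rate _ (pnorm_ge0 (psub (pmu K.-1) (sigma K.-1))) K1 _).
- apply: (exploit_le Xs_ok v_grad v_mono (sigmaX K (leqnn K))).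
  apply: (perturbed_gap_le Xs_ok v_grad mu0 L0 v_smooth zetaP (pmu_eq _ K1K)
    (sigmaX K (leqnn K))) => //.
  have := pmu_close _ K1K; rewrite prednK // => /le_trans; apply.
  by rewrite -[leRHS]mulr1 ler_wpM2l ?pnorm_ge0.
- by rewrite addr_ge0 // mulr_ge0 ?(diamX_ge0 Xs_ok) //; lra.
- by have := mulr_ge0 D0 (divr_ge0 zeta0 (ltW mu0)); nra.
Qed.
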